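(* Let $M>0$ and $0\le\alpha<1$, and let $r_0=r_0(\alpha)$ be the real root in $(0,1)$ of the equation \[(1-\alpha)(1+M)(1-r)^3=M\big(1-\alpha+(1+\alpha)r\big).\] Let $\mathcal{F}$ be the class of analytic functions $f(z)=z+\sum_{n\ge2}a_nz^n$ on $\mathbb{D}$ with $|a_n|\le M$ for all $n\ge2$. Then every $f\in\mathcal{F}$ satisfies $\left|\frac{zf''(z)}{f'(z)}\right|\le1-\alpha$ for $|z|\le r_0$; $r_0(\alpha)$ is the radius of convexity of order $\alpha$ of $\mathcal{F}$; and $r_0(1/2)$ is the radius of uniform convexity of $\mathcal{F}$. All results are sharp (in particular $r_0$ in the first statement cannot be replaced by any larger number).
   Context: $\mathbb{D}=\{z\in\mathbb{C}:|z|<1\}$. For a class $\mathcal{F}$ of analytic functions on $\mathbb{D}$ normalized by $f(0)=0$, $f'(0)=1$, and $0\le\alpha<1$, the radius of convexity of order $\alpha$ of $\mathcal{F}$ is the supremum of $r\in(0,1]$ such that every $f\in\mathcal{F}$ satisfies $f'(z)\ne0$ and $\operatorname{Re}\big(1+zf''(z)/f'(z)\big)>\alpha$ for $|z|<r$. The radius of uniform convexity of $\mathcal{F}$ is the supremum of $r\in(0,1]$ such that every $f\in\mathcal{F}$ satisfies $f'(z)\ne0$ and $\operatorname{Re}\big(1+zf''(z)/f'(z)\big)>\left|zf''(z)/f'(z)\right|$ for $|z|<r$. *)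

From Stdlib Require Import Reals.
From Coquelicot Require Import Coquelicot.
Open Scope R_scope.

Definition inF (M : R) (f : C -> C) : Prop :=
  exists a : nat -> C,
    a 0%nat = 0%C /\ a 1%nat = 1%C /\
    (forall n : nat, (2 <= n)%nat -> Cmod (a n) <= M) /\
    (forall z : C, Cmod z < 1 -> is_series (fun n => (a n * z ^ n)%C) (f z)).

Definition derivs_on_D (f f1 f2 : C -> C) : Prop :=
  forall z : C, Cmod z < 1 ->
    is_derive f z (f1 z) /\ is_derive f1 z (f2 z).

(* Radii r in (0,1] such that every f in F(M) is convex of order alpha on |z|<r;
   the radius of convexity of order alpha is the supremum of this set. *)
Definition convex_order_radii (M alpha : R) (r : R) : Prop :=
  0 < r <= 1 /\
  forall f, inF M f -> forall f1 f2, derivs_on_D f f1 f2 ->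
    forall z : C, Cmod z < r ->
      f1 z <> 0%C /\ alpha < Re (1 + z * f2 z / f1 z)%C.

Definition uniform_convex_radii (M : R) (r : R) : Prop :=
  0 < r <= 1 /\
  forall f, inF M f -> forall f1 f2, derivs_on_D f f1 f2 ->
    forall z : C, Cmod z < r ->
      f1 z <> 0%C /\ Cmod (z * f2 z / f1 z)%C < Re (1 + z * f2 z / f1 z)%C.

Definition r0_eq (M alpha r : R) : Prop :=
  (1 - alpha) * (1 + M) * (1 - r) ^ 3 = M * (1 - alpha + (1 + alpha) * r).

From Stdlib Require Import Reals Lra Lia Psatz ClassicalEpsilon.
From Coquelicot Require Import Coquelicot.
Open Scope R_scope.

(* Comparing the Taylor series of f in F(M) termwise with M times the derivatives of
   the geometric series gives, for |z| = s < 1, |f'(z) - 1| <= d1(s) := M((1-s)^-2 - 1)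
   and |f''(z)| <= d2(s) := 2M(1-s)^-3, hence |z f''(z)/f'(z)| <= s d2(s) / (1 - d1(s)).
   Moreover (1-alpha)(1 - d1(s)) - s d2(s) = P(s)/(1-s)^3, where P is the polynomial
   defining r0, and P is strictly decreasing; so the bound is at most 1 - alpha exactly
   for s <= r0. The function z - M(z^2 + z^3 + ...) attains both coefficient bounds at
   real z, where z f''/f' = - s d2(s)/(1 - d1(s)), which gives sharpness. Finally
   Re(1 + w) >= 1 - |w| turns |w| < 1 - alpha into convexity of order alpha and, for
   alpha = 1/2, into uniform convexity.
   Termwise differentiation of complex power series is reduced to the real power series
   with coefficients |a_n|: its Taylor remainder dominates the complex one. *)

Lemma is_series_norm_le {K : AbsRing} {V : NormedModule K}
  (a : nat -> V) (b : nat -> R) (la : V) (lb : R) :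
  is_series a la -> is_series b lb -> (forall n, norm (a n) <= b n) -> norm la <= lb.
Proof.
  intros Ha Hb Hab.
  enough (H : Rbar_le (norm la) lb) by exact H.
  apply (is_lim_seq_le (fun N => norm (sum_n a N)) (sum_n b)); [| |exact Hb].
  - intros N. eapply Rle_trans; [apply norm_sum_n_m|]. now apply sum_n_m_le.
  - apply (filterlim_comp _ _ _ (sum_n a) norm eventually (locally la)); [exact Ha|].
    apply filterlim_norm.
Qed.

Lemma is_series_shift {K : AbsRing} {V : NormedModule K} (u : nat -> V) (l : V) :
  is_series u l -> is_series (fun n => u (S n)) (minus l (u 0%nat)).
Proof.
  intros H. apply is_series_incr_1.
  unfold minus. rewrite <- plus_assoc, (@plus_opp_l V), plus_zero_r. exact H.
Qed.

Lemma is_series_minus_scal {K : AbsRing} {V : NormedModule K}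
  (u v w : nat -> V) (lu lv lw : V) (c : K) :
  is_series u lu -> is_series v lv -> is_series w lw ->
  is_series (fun n => minus (minus (u n) (v n)) (scal c (w n)))
            (minus (minus lu lv) (scal c lw)).
Proof.
  intros Hu Hv Hw. apply is_series_minus; [now apply is_series_minus | now apply is_series_scal].
Qed.

Lemma is_series_C_unique (u : nat -> C) (l1 l2 : C) :
  is_series u l1 -> is_series u l2 -> l1 = l2.
Proof. apply filterlim_locally_unique. Qed.

Lemma is_series_RtoC (x : nat -> R) (l : R) :
  is_series x l -> is_series (fun n => RtoC (x n)) (RtoC l).
Proof.
  intros H.
  apply (filterlim_ext (fun N => RtoC (sum_n x N))).
  { intros N. induction N as [|N IH].
    - now rewrite !sum_O.
    - rewrite !sum_Sn, <- IH. apply RtoC_plus. }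
  apply (filterlim_comp _ _ _ (sum_n x) RtoC eventually (locally l)); [exact H|].
  apply (@filterlim_locally_ball_norm C_AbsRing R C_NormedModule); [apply locally_filter|].
  intros eps.
  apply (filter_imp (@ball_norm R_AbsRing R_NormedModule l eps));
    [|apply (@locally_ball_norm R_AbsRing R_NormedModule)].
  intros y Hy. change (Cmod (RtoC y - RtoC l)%C < eps).
  now rewrite <- RtoC_minus, Cmod_R.
Qed.

Lemma sum_f_R0_succ (N : nat) :
  sum_f_R0 (fun k => INR (S k)) N = INR (S N) * INR (S (S N)) / 2.
Proof.
  induction N as [|N IH].
  - simpl. field.
  - rewrite tech5, IH, !S_INR. field.
Qed.

Section GeometricDerivatives.

Variable s : R.
Hypothesis Hs : 0 <= s < 1.

Let is_series_geom_nonneg : is_series (fun n => s ^ n) (/ (1 - s)).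
Proof. apply is_series_geom. rewrite Rabs_pos_eq; lra. Qed.

(* Both identities are Cauchy products with the geometric series. *)
Lemma is_series_geom_deriv :
  is_series (fun n => INR (S n) * s ^ n) (/ (1 - s) ^ 2).
Proof.
  pose proof (is_series_mult_pos _ _ _ _ is_series_geom_nonneg is_series_geom_nonneg
     (fun n => pow_le s n (proj1 Hs)) (fun n => pow_le s n (proj1 Hs))) as H.
  replace (/ (1 - s) ^ 2) with (/ (1 - s) * / (1 - s)) by (field; lra).
  refine (is_series_ext _ _ _ _ H). intros n.
  rewrite (sum_eq _ (fun _ => s ^ n)), sum_cte; [apply Rmult_comm|].
  intros i Hi. rewrite <- pow_add. f_equal. lia.
Qed.

Lemma is_series_geom_deriv2 :
  is_series (fun n => INR (S n) * INR (S (S n)) * s ^ n) (2 / (1 - s) ^ 3).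
Proof.
  assert (Hp : forall n, 0 <= INR (S n) * s ^ n).
  { intros n. apply Rmult_le_pos; [apply pos_INR | apply pow_le; lra]. }
  pose proof (is_series_scal 2 _ _ (is_series_mult_pos _ _ _ _ is_series_geom_deriv
     is_series_geom_nonneg Hp (fun n => pow_le s n (proj1 Hs)))) as H.
  replace (2 / (1 - s) ^ 3) with (2 * (/ (1 - s) ^ 2 * / (1 - s))) by (field; lra).
  refine (is_series_ext _ _ _ _ H). intros n.
  change (2 * sum_f_R0 (fun k => INR (S k) * s ^ k * s ^ (n - k)) n
          = INR (S n) * INR (S (S n)) * s ^ n).
  rewrite (sum_eq _ (fun k => INR (S k) * s ^ n)).
  - rewrite <- scal_sum, sum_f_R0_succ. field.
  - intros i Hi. rewrite Rmult_assoc, <- pow_add. do 2 f_equal. lia.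
Qed.

End GeometricDerivatives.

Definition Cmod_seq (a : nat -> C) (n : nat) : R := Cmod (a n).

Definition C_PS_derive (a : nat -> C) (n : nat) : C := (INR (S n) * a (S n))%C.

Definition unit_radius (a : nat -> C) : Prop := Rbar_le 1 (CV_radius (Cmod_seq a)).

Lemma unit_radius_bounded (a : nat -> C) (K : R) :
  (forall n, Cmod (a n) <= K) -> unit_radius a.
Proof.
  intros Ha. apply (proj1 (CV_radius_bounded (Cmod_seq a))).
  exists K. intros n. rewrite pow1, Rmult_1_r, Rabs_pos_eq by apply Cmod_ge_0. apply Ha.
Qed.

Lemma unit_radius_C_PS_derive (a : nat -> C) :
  unit_radius a -> unit_radius (C_PS_derive a).
Proof.
  unfold unit_radius. rewrite (CV_radius_ext (Cmod_seq (C_PS_derive a)) (PS_derive (Cmod_seq a))).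
  - now rewrite CV_radius_derive.
  - intros n. unfold Cmod_seq, C_PS_derive, PS_derive.
    now rewrite Cmod_mult, Cmod_R, Rabs_pos_eq by apply pos_INR.
Qed.

Lemma unit_radius_inside (a : nat -> C) (x : R) :
  unit_radius a -> 0 <= x < 1 -> Rbar_lt (Rabs x) (CV_radius (Cmod_seq a)).
Proof.
  unfold unit_radius. intros Ha Hx. rewrite Rabs_pos_eq by lra. revert Ha.
  destruct (CV_radius (Cmod_seq a)); simpl; intros; lra.
Qed.

Lemma is_series_PSeries (a : nat -> R) (x : R) :
  Rbar_lt (Rabs x) (CV_radius a) -> is_series (fun n => a n * x ^ n) (PSeries a x).
Proof. intros H. apply is_pseries_R, PSeries_correct, CV_radius_inside, H. Qed.

(* Sum of the power series at [z]; an unspecified value where the series diverges. *)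
Definition Csum (a : nat -> C) (z : C) : C :=
  epsilon (inhabits (RtoC 0)) (is_series (fun n => a n * z ^ n)%C).

Lemma is_series_Csum (a : nat -> C) (z : C) :
  unit_radius a -> Cmod z < 1 -> is_series (fun n => a n * z ^ n)%C (Csum a z).
Proof.
  intros Ha Hz. unfold Csum. apply epsilon_spec.
  apply (@ex_series_le C_AbsRing C_CompleteNormedModule _ (fun n => Cmod_seq a n * Cmod z ^ n)).
  - intros n. change (Cmod (a n * z ^ n)%C <= Cmod (a n) * Cmod z ^ n).
    rewrite Cmod_mult, Cmod_pow. apply Rle_refl.
  - eexists. apply is_series_PSeries, unit_radius_inside; [exact Ha|].
    split; [apply Cmod_ge_0 | exact Hz].
Qed.

Lemma Cpow_S_remainder_le (z h : C) (n : nat) :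
  Cmod ((z + h) ^ S n - z ^ S n - INR (S n) * h * z ^ n)%C <=
  (Cmod z + Cmod h) ^ S n - Cmod z ^ S n - INR (S n) * Cmod h * Cmod z ^ n.
Proof.
  induction n as [|n IH].
  - replace ((z + h) ^ 1 - z ^ 1 - INR 1 * h * z ^ 0)%C with (RtoC 0) by (simpl; ring).
    rewrite Cmod_0. simpl. lra.
  - assert (Hrec : ((z + h) ^ S (S n) - z ^ S (S n) - INR (S (S n)) * h * z ^ S n)%C =
       ((z + h) * ((z + h) ^ S n - z ^ S n - INR (S n) * h * z ^ n)
         + INR (S n) * (h * h) * z ^ n)%C).
    { rewrite (S_INR (S n)), RtoC_plus, !Cpow_S. ring. }
    rewrite Hrec.
    eapply Rle_trans; [apply Cmod_triangle|].
    rewrite !Cmod_mult, Cmod_pow, Cmod_R, Rabs_pos_eq by apply pos_INR.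
    eapply Rle_trans.
    + apply Rplus_le_compat_r, Rmult_le_compat;
        [apply Cmod_ge_0 | apply Cmod_ge_0 | apply Cmod_triangle | exact IH].
    + apply Req_le. rewrite (S_INR (S n)). simpl. ring.
Qed.

Lemma is_series_Cpseries_remainder (a : nat -> C) (F : C -> C) (G z h : C) :
  (forall w, Cmod w < 1 -> is_series (fun n => a n * w ^ n)%C (F w)) ->
  is_series (fun n => C_PS_derive a n * z ^ n)%C G ->
  Cmod z < 1 -> Cmod (z + h)%C < 1 ->
  is_series (fun n => a (S n) * (z + h) ^ S n - a (S n) * z ^ S n
                      - h * (C_PS_derive a n * z ^ n))%C
            (F (z + h) - F z - h * G)%C.
Proof.
  intros HF HG Hz Hzh.
  pose proof (is_series_minus_scal _ _ _ _ _ _ h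
    (is_series_shift _ _ (HF _ Hzh)) (is_series_shift _ _ (HF _ Hz)) HG) as S.
  replace (F (z + h) - F z - h * G)%C
    with ((F (z + h) - a 0%nat * (z + h) ^ 0) - (F z - a 0%nat * z ^ 0) - h * G)%C
    by (simpl; ring).
  exact S.
Qed.

Lemma is_series_PSeries_remainder (a : nat -> R) (s k : R) :
  Rbar_lt (Rabs s) (CV_radius a) -> Rbar_lt (Rabs (s + k)) (CV_radius a) ->
  is_series (fun n => a (S n) * (s + k) ^ S n - a (S n) * s ^ S n - k * (PS_derive a n * s ^ n))
            (PSeries a (s + k) - PSeries a s - k * PSeries (PS_derive a) s).
Proof.
  intros Hs Hsk.
  assert (Hd : is_series (fun n => PS_derive a n * s ^ n) (PSeries (PS_derive a) s))
    by (apply is_series_PSeries; now rewrite CV_radius_derive).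
  pose proof (is_series_minus_scal _ _ _ _ _ _ k
    (is_series_shift _ _ (is_series_PSeries _ _ Hsk))
    (is_series_shift _ _ (is_series_PSeries _ _ Hs)) Hd) as S.
  replace (PSeries a (s + k) - PSeries a s)
    with ((PSeries a (s + k) - a 0%nat * (s + k) ^ 0) - (PSeries a s - a 0%nat * s ^ 0))
    by (simpl; ring).
  exact S.
Qed.

Lemma Cpseries_remainder_le (a : nat -> C) (F : C -> C) (G z h : C) :
  unit_radius a ->
  (forall w, Cmod w < 1 -> is_series (fun n => a n * w ^ n)%C (F w)) ->
  is_series (fun n => C_PS_derive a n * z ^ n)%C G ->
  Cmod z + Cmod h < 1 ->
  Cmod (F (z + h) - F z - h * G)%C <=
    PSeries (Cmod_seq a) (Cmod z + Cmod h) - PSeries (Cmod_seq a) (Cmod z)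
    - Cmod h * PSeries (PS_derive (Cmod_seq a)) (Cmod z).
Proof.
  intros Ha HF HG Hzh.
  pose proof (Cmod_ge_0 z). pose proof (Cmod_ge_0 h).
  apply (is_series_norm_le _ _ _ _
    (is_series_Cpseries_remainder a F G z h HF HG ltac:(lra)
       (Rle_lt_trans _ _ _ (Cmod_triangle z h) Hzh))
    (is_series_PSeries_remainder _ _ _
       (unit_radius_inside a (Cmod z) Ha ltac:(lra))
       (unit_radius_inside a (Cmod z + Cmod h) Ha ltac:(lra)))).
  intros n.
  change (Cmod (a (S n) * (z + h) ^ S n - a (S n) * z ^ S n - h * (C_PS_derive a n * z ^ n))%C
    <= Cmod (a (S n)) * (Cmod z + Cmod h) ^ S n - Cmod (a (S n)) * Cmod z ^ S n
       - Cmod h * (INR (S n) * Cmod (a (S n)) * Cmod z ^ n)).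
  replace (a (S n) * (z + h) ^ S n - a (S n) * z ^ S n - h * (C_PS_derive a n * z ^ n))%C
    with (a (S n) * ((z + h) ^ S n - z ^ S n - INR (S n) * h * z ^ n))%C
    by (unfold C_PS_derive; ring).
  rewrite Cmod_mult.
  eapply Rle_trans; [apply Rmult_le_compat_l; [apply Cmod_ge_0 | apply Cpow_S_remainder_le]|].
  apply Req_le. ring.
Qed.

Lemma is_derive_C_of_majorant (F : C -> C) (z L : C) (A : R -> R) (A' d : R) :
  0 < d -> is_derive A (Cmod z) A' ->
  (forall h, Cmod h < d ->
     Cmod (F (z + h) - F z - h * L)%C <= A (Cmod z + Cmod h) - A (Cmod z) - Cmod h * A') ->
  is_derive F z L.
Proof.
  intros Hd HA Hmaj.
  split; [apply is_linear_scal_l|].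
  intros x Hx eps.
  apply (@is_filter_lim_locally_unique C_AbsRing (AbsRing_NormedModule C_AbsRing)) in Hx.
  subst x.
  apply is_derive_Reals in HA. destruct (HA eps (cond_pos eps)) as [d1 Hd1].
  assert (Hpos : 0 < Rmin d1 d) by (apply Rmin_pos; [apply cond_pos | exact Hd]).
  apply (filter_imp (@ball_norm C_AbsRing (AbsRing_NormedModule C_AbsRing) z (mkposreal _ Hpos)));
    [|apply (@locally_ball_norm C_AbsRing (AbsRing_NormedModule C_AbsRing))].
  intros y Hy. change (Cmod (y - z)%C < Rmin d1 d) in Hy.
  change (Cmod (F y - F z - (y - z) * L)%C <= eps * Cmod (y - z)%C).
  replace y with (z + (y - z))%C at 1 by ring.
  pose proof (Rmin_l d1 d). pose proof (Rmin_r d1 d).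
  eapply Rle_trans; [apply Hmaj; lra|].
  destruct (Req_dec (Cmod (y - z)%C) 0) as [Hk|Hk].
  - rewrite Hk, Rplus_0_r. lra.
  - specialize (Hd1 _ Hk ltac:(rewrite Rabs_pos_eq by apply Cmod_ge_0; lra)).
    apply Rabs_lt_between in Hd1.
    assert (0 < Cmod (y - z)%C) by (pose proof (Cmod_ge_0 (y - z)%C); lra).
    apply (Rmult_le_reg_r (/ Cmod (y - z)%C)); [now apply Rinv_0_lt_compat|].
    replace ((A (Cmod z + Cmod (y - z)%C) - A (Cmod z) - Cmod (y - z)%C * A') * / Cmod (y - z)%C)
      with ((A (Cmod z + Cmod (y - z)%C) - A (Cmod z)) / Cmod (y - z)%C - A') by (field; lra).
    replace (eps * Cmod (y - z)%C * / Cmod (y - z)%C) with (pos eps) by (field; lra).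
    lra.
Qed.

Lemma is_derive_Cpseries (a : nat -> C) (F G : C -> C) (z : C) :
  unit_radius a ->
  (forall w, Cmod w < 1 -> is_series (fun n => a n * w ^ n)%C (F w)) ->
  (forall w, Cmod w < 1 -> is_series (fun n => C_PS_derive a n * w ^ n)%C (G w)) ->
  Cmod z < 1 -> is_derive F z (G z).
Proof.
  intros Ha HF HG Hz.
  apply (is_derive_C_of_majorant F z (G z) (PSeries (Cmod_seq a))
           (PSeries (PS_derive (Cmod_seq a)) (Cmod z)) (1 - Cmod z)); [lra| |].
  - apply is_derive_PSeries, unit_radius_inside; [exact Ha|].
    split; [apply Cmod_ge_0 | exact Hz].
  - intros h Hh. apply (Cpseries_remainder_le a F); [exact Ha | exact HF | now apply HG | lra].
Qed.

(* Identifying [f'] and [f''] with the differentiated series needs only uniqueness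
   of complex derivatives, since [Csum] provides a second function with these expansions. *)
Lemma Cpseries_derivs (a : nat -> C) (f f1 f2 : C -> C) :
  unit_radius a ->
  (forall z, Cmod z < 1 -> is_series (fun n => a n * z ^ n)%C (f z)) ->
  derivs_on_D f f1 f2 ->
  forall z, Cmod z < 1 ->
    is_series (fun n => C_PS_derive a n * z ^ n)%C (f1 z) /\
    is_series (fun n => C_PS_derive (C_PS_derive a) n * z ^ n)%C (f2 z).
Proof.
  intros Ha Hf Hd.
  pose proof (unit_radius_C_PS_derive a Ha) as Ha1.
  pose proof (unit_radius_C_PS_derive _ Ha1) as Ha2.
  assert (Hf1 : forall z, Cmod z < 1 -> f1 z = Csum (C_PS_derive a) z).
  { intros z Hz. rewrite <- (is_C_derive_unique _ _ _ (proj1 (Hd z Hz))).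
    apply is_C_derive_unique, (is_derive_Cpseries a); [exact Ha | exact Hf | | exact Hz].
    intros w Hw. now apply is_series_Csum. }
  assert (Hs1 : forall z, Cmod z < 1 -> is_series (fun n => C_PS_derive a n * z ^ n)%C (f1 z)).
  { intros z Hz. rewrite Hf1 by exact Hz. now apply is_series_Csum. }
  intros z Hz. split; [now apply Hs1|].
  rewrite <- (is_C_derive_unique _ _ _ (proj2 (Hd z Hz))).
  rewrite (is_C_derive_unique _ _ (Csum (C_PS_derive (C_PS_derive a)) z)).
  - now apply is_series_Csum.
  - apply (is_derive_Cpseries (C_PS_derive a)); [exact Ha1 | exact Hs1 | | exact Hz].
    intros w Hw. now apply is_series_Csum.
Qed.

(* [majorant_d1 M s = sum_(n>=2) n M s^(n-1)] and
   [majorant_d2 M s = sum_(n>=2) n (n-1) M s^(n-2)]. *)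
Definition majorant_d1 (M s : R) : R := M * (/ (1 - s) ^ 2 - 1).

Definition majorant_d2 (M s : R) : R := 2 * M / (1 - s) ^ 3.

Lemma inF_coef_unit_radius (M : R) (a : nat -> C) :
  a 0%nat = 0%C -> a 1%nat = 1%C -> (forall n, (2 <= n)%nat -> Cmod (a n) <= M) ->
  unit_radius a.
Proof.
  intros H0 H1 HM. apply (unit_radius_bounded a (Rmax M 1)). intros [|[|n]].
  - rewrite H0, Cmod_0. pose proof (Rmax_r M 1). lra.
  - rewrite H1, Cmod_1. apply Rmax_r.
  - eapply Rle_trans; [apply HM; lia | apply Rmax_l].
Qed.

Lemma inF_deriv_bounds (M : R) (f f1 f2 : C -> C) (z : C) :
  inF M f -> derivs_on_D f f1 f2 -> Cmod z < 1 ->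
  Cmod (f1 z - 1)%C <= majorant_d1 M (Cmod z) /\ Cmod (f2 z) <= majorant_d2 M (Cmod z).
Proof.
  intros [a [H0 [H1 [HM Hf]]]] Hd Hz.
  destruct (Cpseries_derivs a f f1 f2 (inF_coef_unit_radius M a H0 H1 HM) Hf Hd z Hz)
    as [S1 S2].
  set (s := Cmod z) in *.
  assert (Hs : 0 <= s < 1) by (split; [apply Cmod_ge_0 | exact Hz]).
  assert (Ha : forall n, Cmod (a (S (S n))) <= M) by (intros n; apply HM; lia).
  split.
  - assert (T1 : is_series (fun n => C_PS_derive a (S n) * z ^ S n)%C (f1 z - 1)%C).
    { replace (f1 z - 1)%C with (minus (f1 z) (C_PS_derive a 0 * z ^ 0)%C)
        by (unfold C_PS_derive; rewrite H1; simpl; change (f1 z - 1 * 1 * 1 = f1 z - 1)%C; ring).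
      exact (is_series_shift _ _ S1). }
    assert (T2 : is_series (fun n => M * (INR (S (S n)) * s ^ S n)) (majorant_d1 M s)).
    { replace (majorant_d1 M s) with (scal M (minus (/ (1 - s) ^ 2) (INR 1 * s ^ 0)))
        by (unfold majorant_d1, scal, minus; simpl; unfold mult, plus, opp; simpl; ring).
      exact (is_series_scal M _ _ (is_series_shift _ _ (is_series_geom_deriv s Hs))). }
    apply (is_series_norm_le _ _ _ _ T1 T2). intros n.
    change (Cmod (C_PS_derive a (S n) * z ^ S n)%C <= M * (INR (S (S n)) * s ^ S n)).
    unfold C_PS_derive. rewrite !Cmod_mult, Cmod_pow, Cmod_R, Rabs_pos_eq by apply pos_INR.
    pose proof (Ha n). pose proof (Cmod_ge_0 (a (S (S n)))).
    assert (0 <= INR (S (S n)) * s ^ S n)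
      by (apply Rmult_le_pos; [apply pos_INR | apply pow_le; lra]).
    fold s. nra.
  - assert (T : is_series (fun n => M * (INR (S n) * INR (S (S n)) * s ^ n)) (majorant_d2 M s)).
    { replace (majorant_d2 M s) with (scal M (2 / (1 - s) ^ 3))
        by (unfold majorant_d2, scal; simpl; unfold mult; simpl; field; lra).
      exact (is_series_scal M _ _ (is_series_geom_deriv2 s Hs)). }
    apply (is_series_norm_le _ _ _ _ S2 T). intros n.
    change (Cmod (C_PS_derive (C_PS_derive a) n * z ^ n)%C
            <= M * (INR (S n) * INR (S (S n)) * s ^ n)).
    unfold C_PS_derive. rewrite !Cmod_mult, Cmod_pow, !Cmod_R, !Rabs_pos_eq by apply pos_INR.
    pose proof (Ha n). pose proof (Cmod_ge_0 (a (S (S n)))).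
    assert (0 <= INR (S n) * INR (S (S n)) * s ^ n)
      by (apply Rmult_le_pos; [apply Rmult_le_pos; apply pos_INR | apply pow_le; lra]).
    fold s. nra.
Qed.

Lemma inF_ratio_bound (M : R) (f f1 f2 : C -> C) (z : C) :
  inF M f -> derivs_on_D f f1 f2 -> Cmod z < 1 -> 0 < 1 - majorant_d1 M (Cmod z) ->
  f1 z <> 0%C /\
  Cmod (z * f2 z / f1 z)%C * (1 - majorant_d1 M (Cmod z)) <= Cmod z * majorant_d2 M (Cmod z).
Proof.
  intros Hf Hd Hz HD.
  destruct (inF_deriv_bounds M f f1 f2 z Hf Hd Hz) as [B1 B2].
  assert (Hf1 : 1 - majorant_d1 M (Cmod z) <= Cmod (f1 z)).
  { pose proof (Cmod_triangle (f1 z) (- (f1 z - 1))%C) as T.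
    rewrite Cmod_opp in T. replace (f1 z + - (f1 z - 1))%C with (RtoC 1) in T by ring.
    rewrite Cmod_1 in T. lra. }
  assert (Hnz : f1 z <> 0%C) by (intros H; rewrite H, Cmod_0 in Hf1; lra).
  split; [exact Hnz|].
  rewrite Cmod_div, Cmod_mult by exact Hnz.
  pose proof (Cmod_ge_0 z). pose proof (Cmod_ge_0 (f2 z)).
  apply (Rle_trans _ (Cmod z * Cmod (f2 z) / Cmod (f1 z) * Cmod (f1 z))).
  - apply Rmult_le_compat_l; [|exact Hf1].
    apply Rdiv_le_0_compat; [nra | lra].
  - replace (Cmod z * Cmod (f2 z) / Cmod (f1 z) * Cmod (f1 z)) with (Cmod z * Cmod (f2 z))
      by (field; lra).
    now apply Rmult_le_compat_l.
Qed.

Definition r0_poly (M alpha s : R) : R :=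
  (1 - alpha) * (1 + M) * (1 - s) ^ 3 - M * (1 - alpha + (1 + alpha) * s).

Lemma r0_eq_poly (M alpha r : R) : r0_eq M alpha r -> r0_poly M alpha r = 0.
Proof. unfold r0_eq, r0_poly. lra. Qed.

Lemma r0_poly_identity (M alpha s : R) : s < 1 ->
  (1 - alpha) * (1 - majorant_d1 M s) - s * majorant_d2 M s = r0_poly M alpha s / (1 - s) ^ 3.
Proof. intros Hs. unfold majorant_d1, majorant_d2, r0_poly. field. lra. Qed.

Lemma r0_poly_decr (M alpha s t : R) : 0 <= M -> alpha <= 1 -> s <= t ->
  r0_poly M alpha t + M * (1 + alpha) * (t - s) <= r0_poly M alpha s.
Proof.
  intros HM Ha Hst. unfold r0_poly.
  assert (0 <= (1 - s) ^ 3 - (1 - t) ^ 3).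
  { replace ((1 - s) ^ 3 - (1 - t) ^ 3)
      with ((t - s) * ((1 - s) ^ 2 + (1 - s) * (1 - t) + (1 - t) ^ 2)) by ring.
    apply Rmult_le_pos; [lra|].
    pose proof (pow2_ge_0 (2 * (1 - s) + (1 - t))). pose proof (pow2_ge_0 (1 - t)). lra. }
  assert (0 <= (1 - alpha) * (1 + M)) by nra.
  nra.
Qed.

Lemma majorant_d1_lt_1 (M alpha s : R) : 0 < M -> alpha < 1 -> 0 <= s < 1 ->
  0 <= r0_poly M alpha s -> 0 < 1 - majorant_d1 M s.
Proof.
  intros HM Ha Hs Hp.
  assert (Hu : 0 < 1 - s) by lra.
  assert (E : (1 - alpha) * (1 - s) ^ 3 * (1 - majorant_d1 M s) = r0_poly M alpha s + 2 * M * s).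
  { unfold majorant_d1, r0_poly. field. lra. }
  assert (Hpos : 0 < r0_poly M alpha s + 2 * M * s).
  { destruct (Req_dec s 0) as [->|Hs0].
    - unfold r0_poly. lra.
    - nra. }
  assert (Hc : 0 < (1 - alpha) * (1 - s) ^ 3)
    by (apply Rmult_lt_0_compat; [lra | now apply pow_lt]).
  apply (Rmult_lt_reg_l _ _ _ Hc). lra.
Qed.

Lemma majorant_d1_lt_1_right (M r0 : R) : 0 < M -> r0 < 1 -> 0 < 1 - majorant_d1 M r0 ->
  exists e, 0 < e /\ forall t, r0 <= t < r0 + e -> t < 1 /\ 0 < 1 - majorant_d1 M t.
Proof.
  intros HM Hr0 HD.
  (* [1 - majorant_d1 M t > 0] exactly when [1 - t > c]. *)
  pose (c := sqrt (M / (1 + M))).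
  assert (Hc0 : 0 <= c) by apply sqrt_pos.
  assert (Hc2 : c * c = M / (1 + M)) by (apply sqrt_sqrt; apply Rdiv_le_0_compat; lra).
  assert (Hform : forall t, t < 1 ->
            1 - majorant_d1 M t = (1 + M) * ((1 - t - c) * (1 - t + c)) / (1 - t) ^ 2).
  { intros t Ht. unfold majorant_d1.
    replace ((1 - t - c) * (1 - t + c)) with ((1 - t) ^ 2 - c * c) by ring.
    rewrite Hc2. field. lra. }
  assert (Hcr0 : c < 1 - r0).
  { rewrite Hform in HD by lra.
    assert (Hu : 0 < (1 - r0) ^ 2) by (apply pow_lt; lra).
    assert (0 < (1 + M) * ((1 - r0 - c) * (1 - r0 + c))).
    { replace ((1 + M) * ((1 - r0 - c) * (1 - r0 + c)))
        with ((1 + M) * ((1 - r0 - c) * (1 - r0 + c)) / (1 - r0) ^ 2 * (1 - r0) ^ 2)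
        by (field; lra).
      now apply Rmult_lt_0_compat. }
    assert (0 < (1 - r0 - c) * (1 - r0 + c)) by nra.
    nra. }
  exists (1 - r0 - c). split; [lra|]. intros t Ht. split; [lra|].
  rewrite Hform by lra.
  apply Rdiv_lt_0_compat; [|apply pow_lt; lra].
  apply Rmult_lt_0_compat; [lra | apply Rmult_lt_0_compat; lra].
Qed.

Lemma point_beyond_root (M alpha r0 r : R) : 0 < M -> 0 <= alpha < 1 -> 0 < r0 < 1 ->
  r0_poly M alpha r0 = 0 -> r0 < r ->
  exists t, r0 < t < r /\ t < 1 /\ 0 < 1 - majorant_d1 M t /\
    (1 - alpha) * (1 - majorant_d1 M t) < t * majorant_d2 M t.
Proof.
  intros HM Ha Hr0 Hp Hr.
  destruct (majorant_d1_lt_1_right M r0 HM (proj2 Hr0)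
              (majorant_d1_lt_1 M alpha r0 HM (proj2 Ha) ltac:(lra) ltac:(lra)))
    as (e & He & Hpos).
  pose (t := r0 + Rmin e (r - r0) / 2).
  assert (Hm0 : 0 < Rmin e (r - r0)) by (apply Rmin_pos; lra).
  assert (Ht : r0 < t < r) by (pose proof (Rmin_r e (r - r0)); unfold t; lra).
  destruct (Hpos t) as [Ht1 HD]; [pose proof (Rmin_l e (r - r0)); unfold t; lra|].
  exists t. split; [exact Ht|]. split; [exact Ht1|]. split; [exact HD|].
  pose proof (r0_poly_decr M alpha r0 t ltac:(lra) ltac:(lra) ltac:(lra)) as Hdec.
  assert (0 < M * (1 + alpha) * (t - r0)) by (apply Rmult_lt_0_compat; [nra | lra]).
  assert (r0_poly M alpha t / (1 - t) ^ 3 < 0)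
    by (apply Rdiv_neg_pos; [lra | apply pow_lt; lra]).
  pose proof (r0_poly_identity M alpha t Ht1). lra.
Qed.

Lemma inF_ratio_le_r0 (M alpha r0 : R) (f f1 f2 : C -> C) (z : C) :
  0 < M -> 0 <= alpha < 1 -> r0 < 1 -> r0_poly M alpha r0 = 0 ->
  inF M f -> derivs_on_D f f1 f2 -> Cmod z <= r0 ->
  f1 z <> 0%C /\ Cmod (z * f2 z / f1 z)%C <= 1 - alpha /\
  (Cmod z < r0 -> Cmod (z * f2 z / f1 z)%C < 1 - alpha).
Proof.
  intros HM Ha Hr0 Hp Hf Hd Hz.
  pose proof (Cmod_ge_0 z) as Hz0.
  pose proof (r0_poly_decr M alpha (Cmod z) r0 ltac:(lra) ltac:(lra) Hz) as Hdec.
  assert (Hslope : 0 <= M * (1 + alpha) * (r0 - Cmod z))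
    by (apply Rmult_le_pos; [apply Rmult_le_pos |]; lra).
  pose proof (majorant_d1_lt_1 M alpha (Cmod z) HM (proj2 Ha) ltac:(lra) ltac:(lra)) as HD.
  destruct (inF_ratio_bound M f f1 f2 z Hf Hd ltac:(lra) HD) as [Hnz Hw].
  pose proof (r0_poly_identity M alpha (Cmod z) ltac:(lra)) as Hid.
  assert (Hu : 0 < (1 - Cmod z) ^ 3) by (apply pow_lt; lra).
  split; [exact Hnz|]. split.
  - assert (0 <= r0_poly M alpha (Cmod z) / (1 - Cmod z) ^ 3)
      by (apply Rdiv_le_0_compat; lra).
    apply (Rmult_le_reg_r _ _ _ HD). lra.
  - intros Hlt.
    assert (0 < M * (1 + alpha) * (r0 - Cmod z))
      by (apply Rmult_lt_0_compat; [apply Rmult_lt_0_compat |]; lra).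
    assert (0 < r0_poly M alpha (Cmod z) / (1 - Cmod z) ^ 3)
      by (apply Rdiv_lt_0_compat; lra).
    apply (Rmult_lt_reg_r _ _ _ HD). lra.
Qed.

Definition extremal_coef (M : R) (n : nat) : R :=
  match n with 0 => 0 | 1 => 1 | _ => - M end.

Lemma C_PS_derive_RtoC (a : nat -> C) (x : nat -> R) :
  (forall n, a n = RtoC (x n)) -> forall n, C_PS_derive a n = RtoC (PS_derive x n).
Proof. intros Hax n. unfold C_PS_derive, PS_derive. now rewrite Hax, RtoC_mult. Qed.

Lemma Csum_RtoC (a : nat -> C) (x : nat -> R) (t l : R) :
  unit_radius a -> (forall n, a n = RtoC (x n)) -> 0 <= t < 1 ->
  is_series (fun n => x n * t ^ n) l -> Csum a (RtoC t) = RtoC l.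
Proof.
  intros Ha Hax Ht Hx.
  apply (is_series_C_unique (fun n => a n * RtoC t ^ n)%C).
  - apply is_series_Csum; [exact Ha|]. rewrite Cmod_R, Rabs_pos_eq; lra.
  - refine (is_series_ext _ _ _ _ (is_series_RtoC _ _ Hx)).
    intros n. now rewrite Hax, RtoC_mult, RtoC_pow.
Qed.

Lemma is_series_extremal_d1 (M t : R) : 0 <= t < 1 ->
  is_series (fun n => PS_derive (extremal_coef M) n * t ^ n) (1 - majorant_d1 M t).
Proof.
  intros Ht. apply is_series_decr_1. cbv beta.
  assert (T : is_series (fun n => - M * (INR (S (S n)) * t ^ S n)) (- majorant_d1 M t)).
  { replace (- majorant_d1 M t) with (scal (- M) (minus (/ (1 - t) ^ 2) (INR 1 * t ^ 0)))
      by (unfold majorant_d1, scal, minus; simpl; unfold mult, plus, opp; simpl; ring).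
    exact (is_series_scal (- M) _ _ (is_series_shift _ _ (is_series_geom_deriv t Ht))). }
  match goal with |- is_series _ ?l => replace l with (- majorant_d1 M t) end.
  2:{ unfold PS_derive, plus, opp; simpl; unfold plus, opp; simpl. ring. }
  refine (is_series_ext _ _ _ _ T). intros n. unfold PS_derive. simpl. ring.
Qed.

Lemma is_series_extremal_d2 (M t : R) : 0 <= t < 1 ->
  is_series (fun n => PS_derive (PS_derive (extremal_coef M)) n * t ^ n) (- majorant_d2 M t).
Proof.
  intros Ht.
  replace (- majorant_d2 M t) with (- M * (2 / (1 - t) ^ 3)) by (unfold majorant_d2; field; lra).
  refine (is_series_ext _ _ _ _ (is_series_scal (- M) _ _ (is_series_geom_deriv2 t Ht))).
  intros n. unfold PS_derive.
  change (- M * (INR (S n) * INR (S (S n)) * t ^ n)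
          = INR (S n) * (INR (S (S n)) * - M) * t ^ n).
  ring.
Qed.

(* [z - M (z^2 + z^3 + ...)] has all coefficients of modulus [M] and real ones of
   the worst sign, so on [0, 1) it attains the bounds of [inF_deriv_bounds]. *)
Lemma extremal_function (M : R) : 0 < M ->
  exists f f1 f2, inF M f /\ derivs_on_D f f1 f2 /\
    forall t, 0 <= t < 1 ->
      f1 (RtoC t) = RtoC (1 - majorant_d1 M t) /\ f2 (RtoC t) = RtoC (- majorant_d2 M t).
Proof.
  intros HM.
  set (a := fun n => RtoC (extremal_coef M n)).
  assert (Hbound : forall n, (2 <= n)%nat -> Cmod (a n) <= M).
  { intros [|[|n]] Hn; [lia | lia |].
    unfold a. simpl. rewrite Cmod_R, Rabs_Ropp, Rabs_pos_eq; lra. }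
  assert (Ha : unit_radius a) by now apply (inF_coef_unit_radius M).
  pose proof (unit_radius_C_PS_derive a Ha) as Ha1.
  pose proof (unit_radius_C_PS_derive _ Ha1) as Ha2.
  pose proof (C_PS_derive_RtoC a _ (fun n => eq_refl)) as Hd1.
  pose proof (C_PS_derive_RtoC _ _ Hd1) as Hd2.
  exists (Csum a), (Csum (C_PS_derive a)), (Csum (C_PS_derive (C_PS_derive a))).
  split; [|split].
  - exists a. split; [reflexivity|]. split; [reflexivity|]. split; [exact Hbound|].
    intros z Hz. now apply is_series_Csum.
  - intros z Hz. split.
    + apply (is_derive_Cpseries a); [exact Ha | | | exact Hz];
        intros w Hw; now apply is_series_Csum.
    + apply (is_derive_Cpseries (C_PS_derive a)); [exact Ha1 | | | exact Hz];
        intros w Hw; now apply is_series_Csum.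
  - intros t Ht. split.
    + exact (Csum_RtoC _ _ _ _ Ha1 Hd1 Ht (is_series_extremal_d1 M t Ht)).
    + exact (Csum_RtoC _ _ _ _ Ha2 Hd2 Ht (is_series_extremal_d2 M t Ht)).
Qed.

Lemma extremal_witness (M alpha r0 r : R) : 0 < M -> 0 <= alpha < 1 -> 0 < r0 < 1 ->
  r0_poly M alpha r0 = 0 -> r0 < r ->
  exists f f1 f2 z, inF M f /\ derivs_on_D f f1 f2 /\ Cmod z < 1 /\ Cmod z < r /\
    exists q, 1 - alpha < q /\ (z * f2 z / f1 z)%C = RtoC (- q).
Proof.
  intros HM Ha Hr0 Hp Hr.
  destruct (extremal_function M HM) as (f & f1 & f2 & Hf & Hd & Hval).
  destruct (point_beyond_root M alpha r0 r HM Ha Hr0 Hp Hr) as (t & Htr & Ht1 & HD & Hviol).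
  destruct (Hval t ltac:(lra)) as [E1 E2].
  exists f, f1, f2, (RtoC t).
  rewrite Cmod_R, Rabs_pos_eq by lra.
  split; [exact Hf|]. split; [exact Hd|]. split; [lra|]. split; [lra|].
  exists (t * majorant_d2 M t / (1 - majorant_d1 M t)). split.
  - apply (Rmult_lt_reg_r _ _ _ HD). unfold Rdiv. rewrite Rmult_assoc, Rinv_l by lra. lra.
  - rewrite E1, E2, <- RtoC_mult, <- RtoC_div by lra. f_equal. field. lra.
Qed.

Lemma is_lub_threshold (P : R -> Prop) (r0 : R) :
  P r0 -> (forall r, r0 < r -> ~ P r) -> is_lub P r0.
Proof.
  intros H0 Hgt. split.
  - intros r Hr. destruct (Rle_or_lt r r0) as [Hle|Hlt]; [exact Hle|].
    exfalso. exact (Hgt r Hlt Hr).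
  - intros b Hb. exact (Hb r0 H0).
Qed.

Lemma Re_one_plus_ge (w : C) : 1 - Cmod w <= Re (1 + w)%C.
Proof.
  rewrite re_plus, re_RtoC. pose proof (re_le_Cmod w) as H.
  apply Rabs_le_between in H. lra.
Qed.

Lemma is_lub_convex_order_radii (M alpha r0 : R) : 0 < M -> 0 <= alpha < 1 -> 0 < r0 < 1 ->
  r0_poly M alpha r0 = 0 -> is_lub (convex_order_radii M alpha) r0.
Proof.
  intros HM Ha Hr0 Hp. apply is_lub_threshold.
  - split; [lra|]. intros f Hf f1 f2 Hd z Hz.
    destruct (inF_ratio_le_r0 M alpha r0 f f1 f2 z HM Ha (proj2 Hr0) Hp Hf Hd ltac:(lra))
      as [Hnz [_ Hlt]].
    split; [exact Hnz|].
    pose proof (Hlt Hz). pose proof (Re_one_plus_ge (z * f2 z / f1 z)%C). lra.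
  - intros r Hr [_ Hconv].
    destruct (extremal_witness M alpha r0 r HM Ha Hr0 Hp Hr)
      as (f & f1 & f2 & z & Hf & Hd & _ & Hzr & q & Hq & Hw).
    destruct (Hconv f Hf f1 f2 Hd z Hzr) as [_ HRe].
    rewrite Hw, <- RtoC_plus, re_RtoC in HRe. lra.
Qed.

Lemma is_lub_uniform_convex_radii (M r1 : R) : 0 < M -> 0 < r1 < 1 ->
  r0_poly M (1 / 2) r1 = 0 -> is_lub (uniform_convex_radii M) r1.
Proof.
  intros HM Hr1 Hp. apply is_lub_threshold.
  - split; [lra|]. intros f Hf f1 f2 Hd z Hz.
    destruct (inF_ratio_le_r0 M (1 / 2) r1 f f1 f2 z HM ltac:(lra) (proj2 Hr1) Hp Hf Hd
                ltac:(lra)) as [Hnz [_ Hlt]].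
    split; [exact Hnz|].
    pose proof (Hlt Hz). pose proof (Re_one_plus_ge (z * f2 z / f1 z)%C). lra.
  - intros r Hr [_ Hunif].
    destruct (extremal_witness M (1 / 2) r1 r HM ltac:(lra) Hr1 Hp Hr)
      as (f & f1 & f2 & z & Hf & Hd & _ & Hzr & q & Hq & Hw).
    destruct (Hunif f Hf f1 f2 Hd z Hzr) as [_ HRe].
    rewrite Hw, <- RtoC_plus, re_RtoC, Cmod_R, Rabs_Ropp, Rabs_pos_eq in HRe by lra. lra.
Qed.

Theorem corollary3p7 (M alpha r0 r1 : R) :
  0 < M -> 0 <= alpha < 1 ->
  0 < r0 < 1 -> r0_eq M alpha r0 ->
  0 < r1 < 1 -> r0_eq M (1/2) r1 ->
  (forall f, inF M f -> forall f1 f2, derivs_on_D f f1 f2 ->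
     forall z : C, Cmod z <= r0 ->
       f1 z <> 0%C /\ Cmod (z * f2 z / f1 z)%C <= 1 - alpha) /\
  (forall r, r0 < r ->
     exists f, inF M f /\ exists f1 f2, derivs_on_D f f1 f2 /\
       exists z : C, Cmod z < 1 /\ Cmod z <= r /\
         (f1 z = 0%C \/ 1 - alpha < Cmod (z * f2 z / f1 z)%C)) /\
  is_lub (convex_order_radii M alpha) r0 /\
  is_lub (uniform_convex_radii M) r1.
Proof.
  intros HM Ha Hr0 Heq Hr1 Heq1.
  apply r0_eq_poly in Heq, Heq1.
  split; [|split; [|split]].
  - intros f Hf f1 f2 Hd z Hz.
    destruct (inF_ratio_le_r0 M alpha r0 f f1 f2 z HM Ha (proj2 Hr0) Heq Hf Hd Hz)
      as [Hnz [Hle _]].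
    now split.
  - intros r Hr.
    destruct (extremal_witness M alpha r0 r HM Ha Hr0 Heq Hr)
      as (f & f1 & f2 & z & Hf & Hd & Hz1 & Hzr & q & Hq & Hw).
    exists f. split; [exact Hf|]. exists f1, f2. split; [exact Hd|].
    exists z. split; [exact Hz1|]. split; [lra|].
    right. rewrite Hw, Cmod_R, Rabs_Ropp, Rabs_pos_eq; lra.
  - now apply is_lub_convex_order_radii.
  - now apply is_lub_uniform_convex_radii.
Qed.
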